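(* Let $U$ and $M$ be $k\times N$ real matrices, and let $\pi$ be a probability distribution on $[k]$ such that $u_{i,j}=\pi(i)m_{i,j}$ for all $i\in[k]$, $j\in[N]$. Then there exists a probability distribution $\widehat\pi$ on $[k]$, with support contained in the support of $\pi$, such that \[ \|M\|_{\ell_\infty\to L_2(\widehat\pi)}\le4\gamma_2^*(U). \]
   Context: For a distribution $\rho$ on $[k]$, $\|a\|_{L_2(\rho)}=(\sum_v\rho(v)a_v^2)^{1/2}$ and $\|M\|_{\ell_\infty\to L_2(\rho)}=\max_{\|f\|_\infty\le1}\|Mf\|_{L_2(\rho)}$. For matrices, $\|M\|_{1\to2}$ is the largest $\ell_2$ norm of a column and $\|M\|_{2\to\infty}$ the largest $\ell_2$ norm of a row; $\gamma_2(M)=\min\{\|R\|_{2\to\infty}\|A\|_{1\to2}:RA=M\}$; $M\bullet N=\sum_{i,j}m_{i,j}n_{i,j}$; $\gamma_2^*(U)=\max\{U\bullet V:\gamma_2(V)\le1\}$. *)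

From HB Require Import structures.
From mathcomp Require Import all_boot all_order all_algebra.
From mathcomp Require Import boolp classical_sets reals.
Set Implicit Arguments. Unset Strict Implicit. Unset Printing Implicit Defensive.
Import Order.TTheory GRing.Theory Num.Theory.
Local Open Scope ring_scope.
Local Open Scope classical_set_scope.

Section Defs.
Variable R : realType.

Definition is_distr (k : nat) (rho : 'I_k -> R) : Prop :=
  (forall i, 0 <= rho i) /\ \sum_(i < k) rho i = 1.

Definition norm_1_2 (m n : nat) (A : 'M[R]_(m, n)) : R :=
  \big[Num.max/0]_(j < n) Num.sqrt (\sum_(i < m) A i j ^+ 2).

Definition norm_2_inf (m n : nat) (A : 'M[R]_(m, n)) : R :=
  \big[Num.max/0]_(i < m) Num.sqrt (\sum_(j < n) A i j ^+ 2).

Definition gamma2 (m n : nat) (V : 'M[R]_(m, n)) : R :=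
  inf [set x : R | exists (r : nat) (Rm : 'M[R]_(m, r)) (A : 'M[R]_(r, n)),
                     Rm *m A = V /\ x = norm_2_inf Rm * norm_1_2 A].

Definition frob (m n : nat) (A B : 'M[R]_(m, n)) : R :=
  \sum_(i < m) \sum_(j < n) A i j * B i j.

Definition gamma2_dual (m n : nat) (U : 'M[R]_(m, n)) : R :=
  sup [set x : R | exists V : 'M[R]_(m, n), gamma2 V <= 1 /\ x = frob U V].

Definition L2norm (k : nat) (rho : 'I_k -> R) (a : 'cV[R]_k) : R :=
  Num.sqrt (\sum_(v < k) rho v * a v ord0 ^+ 2).

Definition norm_inf_L2 (k n : nat) (rho : 'I_k -> R) (M : 'M[R]_(k, n)) : R :=
  sup [set x : R | exists f : 'cV[R]_n,
                     (forall j, `|f j ord0| <= 1) /\ x = L2norm rho (M *m f)].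

End Defs.

From HB Require Import structures.
From mathcomp Require Import all_boot all_order all_algebra.
From mathcomp Require Import boolp classical_sets reals.
From mathcomp Require Import ring lra.
Set Implicit Arguments. Unset Strict Implicit. Unset Printing Implicit Defensive.
Import Order.TTheory GRing.Theory Num.Theory.
Local Open Scope ring_scope.
Local Open Scope classical_set_scope.

(* Read [pihat] as a mixed strategy in the zero-sum game in which the minimiser
   picks a distribution p on the support of pi, the maximiser a vector f of the
   unit cube, and the payoff is sum_i p_i (M f)_i^2.  For cube vectors
   f_1, ..., f_T let W be the k x T matrix ((M f_t)_i); the factorisation V = X Y,
   with X the row-normalised W and Y = (f_1 ... f_T)^T / sqrt T, has
   gamma_2(V) <= 1, and U . V is the pi-average of the row norms of W divided by
   sqrt T.  Hence some i in the support of pi has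
   sum_t (M f_t)_i^2 <= T gamma_2^*(U)^2: no sequence of plays of the maximiser
   hurts every pure strategy of the minimiser.  Regret matching against
   approximate best responses has regret O(sqrt T), so its average play pihat
   has payoff at most 2 gamma_2^*(U)^2 against every f, i.e.
   ||M||_{l_oo -> L_2(pihat)} <= sqrt 2 gamma_2^*(U). *)

Section Distributions.
Variable R : realType.

Definition expected k (p l : 'I_k -> R) := \sum_i p i * l i.

Lemma expected_ge0 k (p l : 'I_k -> R) :
  (forall i, 0 <= p i) -> (forall i, 0 <= l i) -> 0 <= expected p l.
Proof. by move=> p_ge0 l_ge0; apply: sumr_ge0 => i _; apply: mulr_ge0. Qed.

Lemma expected_le k (p l : 'I_k -> R) B :
  is_distr p -> (forall i, l i <= B) -> expected p l <= B.
Proof.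
move=> [p_ge0 p_sum] l_le; apply: le_trans (_ : \sum_i p i * B <= B).
  by apply: ler_sum => i _; apply: ler_wpM2l.
by rewrite -mulr_suml p_sum mul1r.
Qed.

Lemma expected_le_witness k (p z : 'I_k -> R) c :
  is_distr p -> expected p z <= c -> exists2 i, p i != 0 & z i <= c.
Proof.
move=> [p_ge0 p_sum] pz_le.
have /existsP[i0 pi0] : [exists i, p i != 0].
  apply: contraLR (oner_neq0 R) => /existsPn p0; rewrite negbK -p_sum.
  by rewrite big1 // => i _; apply/eqP/negPn/p0.
have [i pi z_min] := @arg_minP _ _ _ i0 (fun i => p i != 0) z pi0.
exists i => //; apply: le_trans pz_le.
rewrite -[z i]mul1r -p_sum mulr_suml; apply: ler_sum => j _.
have [->|pj] := eqVneq (p j) 0; first by rewrite !mul0r.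
by rewrite ler_wpM2l ?z_min.
Qed.

Lemma is_distr_average k T (ps : 'I_T -> 'I_k -> R) :
  (0 < T)%N -> (forall s, is_distr (ps s)) ->
  is_distr (fun i => (\sum_s ps s i) / T%:R).
Proof.
move=> T_gt0 ps_distr; split => [i|].
  by rewrite divr_ge0 // sumr_ge0 // => s _; case: (ps_distr s).
rewrite -mulr_suml exchange_big /=.
under eq_bigr => s _ do rewrite (ps_distr s).2.
by rewrite sumr_const card_ord divff // pnatr_eq0 -lt0n.
Qed.

Lemma expected_average k T (ps : 'I_T -> 'I_k -> R) l :
  expected (fun i => (\sum_s ps s i) / T%:R) l = (\sum_s expected (ps s) l) / T%:R.
Proof.
rewrite /expected exchange_big mulr_suml; apply: eq_bigr => i _ /=.
by rewrite mulrAC !mulr_suml.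
Qed.

End Distributions.

Section Gamma2.
Variable R : realType.

Lemma sumr_sqr_ge0 (I : finType) (a : I -> R) : 0 <= \sum_i a i ^+ 2.
Proof. by apply: sumr_ge0 => i _; apply: sqr_ge0. Qed.

Lemma CauchySchwarz_sum (I : finType) (a b : I -> R) :
  (\sum_i a i * b i) ^+ 2 <= (\sum_i a i ^+ 2) * (\sum_i b i ^+ 2).
Proof.
set A := \sum_i a i ^+ 2; set B := \sum_i b i ^+ 2; set C := \sum_i a i * b i.
have Lagrange : \sum_i \sum_j (a i * b j - a j * b i) ^+ 2 = 2 * (A * B - C ^+ 2).
  transitivity (\sum_i \sum_j (a i ^+ 2 * b j ^+ 2 + a j ^+ 2 * b i ^+ 2
                               - 2 * (a i * b i * (a j * b j)))).
    by apply: eq_bigr => i _; apply: eq_bigr => j _; ring.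
  under eq_bigr => i _ do rewrite sumrB big_split /= -!mulr_sumr -mulr_suml.
  rewrite sumrB big_split /= -mulr_sumr -!mulr_suml -/A -/B -/C.
  by rewrite -mulr_sumr -mulr_suml -/C; ring.
have : 0 <= 2 * (A * B - C ^+ 2).
  by rewrite -Lagrange; apply: sumr_ge0 => i _; apply: sumr_sqr_ge0.
by rewrite pmulr_rge0 // subr_ge0.
Qed.

Lemma CauchySchwarz_sum_sqrt (I : finType) (a b : I -> R) :
  `|\sum_i a i * b i| <= Num.sqrt (\sum_i a i ^+ 2) * Num.sqrt (\sum_i b i ^+ 2).
Proof.
rewrite -sqrtrM ?sumr_sqr_ge0 // -sqrtr_sqr ler_sqrt ?CauchySchwarz_sum //.
by rewrite mulr_ge0 ?sumr_sqr_ge0.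
Qed.

Definition row_norm m n (A : 'M[R]_(m, n)) i := Num.sqrt (\sum_j A i j ^+ 2).
Definition col_norm m n (A : 'M[R]_(m, n)) j := Num.sqrt (\sum_i A i j ^+ 2).

Lemma row_norm_ge0 m n (A : 'M[R]_(m, n)) i : 0 <= row_norm A i.
Proof. exact: sqrtr_ge0. Qed.

Lemma row_norm_le_norm_2_inf m n (A : 'M[R]_(m, n)) i : row_norm A i <= norm_2_inf A.
Proof. exact: (le_bigmax _ (row_norm A)). Qed.

Lemma col_norm_le_norm_1_2 m n (A : 'M[R]_(m, n)) j : col_norm A j <= norm_1_2 A.
Proof. exact: (le_bigmax _ (col_norm A)). Qed.

Lemma norm_2_inf_ge0 m n (A : 'M[R]_(m, n)) : 0 <= norm_2_inf A.
Proof. exact: bigmax_ge_id. Qed.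

Lemma norm_1_2_ge0 m n (A : 'M[R]_(m, n)) : 0 <= norm_1_2 A.
Proof. exact: bigmax_ge_id. Qed.

Lemma norm_2_inf_le m n (A : 'M[R]_(m, n)) c :
  0 <= c -> (forall i, row_norm A i <= c) -> norm_2_inf A <= c.
Proof. by move=> c_ge0 Ac; apply: bigmax_le => // i _; apply: Ac. Qed.

Lemma norm_1_2_le m n (A : 'M[R]_(m, n)) c :
  0 <= c -> (forall j, col_norm A j <= c) -> norm_1_2 A <= c.
Proof. by move=> c_ge0 Ac; apply: bigmax_le => // i _; apply: Ac. Qed.

Lemma gamma2_mulmx_le m r n (X : 'M[R]_(m, r)) (Y : 'M[R]_(r, n)) :
  gamma2 (X *m Y) <= norm_2_inf X * norm_1_2 Y.
Proof.
apply: ge_inf; last by exists r, X, Y.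
by exists 0 => _ [r' [X' [Y' [_ ->]]]]; rewrite mulr_ge0 ?norm_2_inf_ge0 ?norm_1_2_ge0.
Qed.

Lemma normr_le_gamma2 m n (V : 'M[R]_(m, n)) i j : `|V i j| <= gamma2 V.
Proof.
apply: lb_le_inf.
  by exists (norm_2_inf (1%:M : 'M_m) * norm_1_2 V), m, 1%:M, V; rewrite mul1mx.
move=> _ [r [X [Y [<- ->]]]]; rewrite mxE.
apply: le_trans (CauchySchwarz_sum_sqrt _ _) _.
by apply: ler_pM; rewrite ?sqrtr_ge0 ?row_norm_le_norm_2_inf ?col_norm_le_norm_1_2.
Qed.

Lemma frob_le_gamma2_dual m n (U V : 'M[R]_(m, n)) :
  gamma2 V <= 1 -> frob U V <= gamma2_dual U.
Proof.
move=> V_le1; apply: ub_le_sup; last by exists V.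
exists (\sum_i \sum_j `|U i j|) => _ [W [W_le1 ->]].
apply: le_trans (ler_norm _) _; apply: le_trans (ler_norm_sum _ _ _) _.
apply: ler_sum => i _; apply: le_trans (ler_norm_sum _ _ _) _.
apply: ler_sum => j _; rewrite normrM ler_piMr //.
exact: le_trans (normr_le_gamma2 W i j) W_le1.
Qed.

Lemma frob_mulmx m r n (U : 'M[R]_(m, n)) (X : 'M[R]_(m, r)) (Y : 'M[R]_(r, n)) :
  frob U (X *m Y) = frob (U *m Y^T) X.
Proof.
apply: eq_bigr => i _; under eq_bigr => j _ do rewrite mxE mulr_sumr.
rewrite exchange_big; apply: eq_bigr => t _ /=.
by rewrite mxE mulr_suml; apply: eq_bigr => j _; rewrite mxE; ring.
Qed.

Definition row_normalize m n (A : 'M[R]_(m, n)) :=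
  \matrix_(i, j) (A i j / row_norm A i).

Lemma norm_2_inf_row_normalize m n (A : 'M[R]_(m, n)) :
  norm_2_inf (row_normalize A) <= 1.
Proof.
apply: norm_2_inf_le => // i; rewrite -sqrtr1 ler_sqrt //.
under eq_bigr => j _ do rewrite mxE expr_div_n.
rewrite -mulr_suml -[\sum_j _](@sqr_sqrtr _ _ (sumr_sqr_ge0 _)) -/(row_norm A i).
have [->|Ai_neq0] := eqVneq (row_norm A i) 0; first by rewrite expr0n mul0r.
by rewrite divff ?expf_neq0.
Qed.

Lemma frob_row_normalize m n (A : 'M[R]_(m, n)) :
  frob A (row_normalize A) = \sum_i row_norm A i.
Proof.
apply: eq_bigr => i _.
under eq_bigr => j _ do rewrite mxE mulrA -expr2.
rewrite -mulr_suml -[\sum_j _](@sqr_sqrtr _ _ (sumr_sqr_ge0 _)) -/(row_norm A i).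
have [->|Ai_neq0] := eqVneq (row_norm A i) 0; first by rewrite expr0n !mul0r.
by rewrite expr2 mulfK.
Qed.

Lemma sum_row_norm_le_gamma2_dual m r n (U : 'M[R]_(m, n)) (Y : 'M[R]_(r, n)) :
  norm_1_2 Y <= 1 -> \sum_i row_norm (U *m Y^T) i <= gamma2_dual U.
Proof.
move=> Y_le1; rewrite -frob_row_normalize -frob_mulmx.
apply: frob_le_gamma2_dual; apply: le_trans (gamma2_mulmx_le _ _) _.
by rewrite -[1]mulr1 ler_pM ?norm_2_inf_ge0 ?norm_1_2_ge0 ?norm_2_inf_row_normalize.
Qed.

Lemma gamma2_dual_ge0 m n (U : 'M[R]_(m, n)) : 0 <= gamma2_dual U.
Proof.
have Y_le1 : norm_1_2 (0 : 'M[R]_(0, n)) <= 1.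
  by apply: norm_1_2_le => // j; rewrite /col_norm big_ord0 sqrtr0.
apply: le_trans (sum_row_norm_le_gamma2_dual U Y_le1).
by apply: sumr_ge0 => i _; apply: row_norm_ge0.
Qed.

Lemma row_norm_scale m n (c : 'I_m -> R) (A : 'M[R]_(m, n)) i :
  row_norm (\matrix_(i, j) (c i * A i j)) i = `|c i| * row_norm A i.
Proof.
rewrite /row_norm; under eq_bigr => j _ do rewrite mxE exprMn.
by rewrite -mulr_sumr sqrtrM ?sqr_ge0 // sqrtr_sqr.
Qed.

Lemma sum_weighted_row_norm_le k N T (U M : 'M[R]_(k, N)) (pi : 'I_k -> R)
    (F : 'M[R]_(N, T)) :
  (forall i, 0 <= pi i) -> (forall i j, U i j = pi i * M i j) ->
  (forall j t, `|F j t| <= 1) ->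
  \sum_i pi i * row_norm (M *m F) i <= Num.sqrt T%:R * gamma2_dual U.
Proof.
move=> pi_ge0 UE F_le1; case: T F F_le1 => [|T] F F_le1.
  by rewrite sqrtr0 mul0r big1 // => i _; rewrite /row_norm big_ord0 sqrtr0 mulr0.
set s := Num.sqrt T.+1%:R; have s_gt0 : 0 < s by rewrite sqrtr_gt0.
have Y_le1 : norm_1_2 (s^-1 *: F^T) <= 1.
  apply: norm_1_2_le => // j; rewrite -sqrtr1 ler_sqrt //.
  apply: le_trans (_ : \sum_(t < T.+1) s^-1 ^+ 2 <= 1).
    apply: ler_sum => t _; rewrite !mxE exprMn ler_piMr ?sqr_ge0 //.
    by rewrite -real_normK ?num_real // exprn_ile1.
  rewrite sumr_const card_ord exprVn sqr_sqrtr //.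
  by rewrite -[X in X <= _]mulr_natl mulfV ?pnatr_eq0.
have := sum_row_norm_le_gamma2_dual U Y_le1.
have -> : U *m (s^-1 *: F^T)^T = \matrix_(i, t) (pi i / s * (M *m F) i t).
  apply/matrixP => i t; rewrite !mxE mulr_sumr; apply: eq_bigr => j _.
  by rewrite !mxE UE; ring.
under eq_bigr => i _
  do rewrite row_norm_scale ger0_norm ?divr_ge0 ?pi_ge0 ?ltW // mulrAC.
by rewrite -mulr_suml ler_pdivrMr // mulrC.
Qed.
End Gamma2.

Section RegretMatching.
Variable R : realType.
Variables (k : nat) (S : pred 'I_k) (p0 : 'I_k -> R).
Variables (loss : ('I_k -> R) -> 'I_k -> R) (B : R).
Hypothesis p0_distr : is_distr p0.
Hypothesis p0_out : forall i, ~~ S i -> p0 i = 0.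
Hypothesis loss_ge0 : forall p i, 0 <= loss p i.
Hypothesis loss_le : forall p i, loss p i <= B.

Definition pos_part (x : R) := Num.max x 0.

Lemma pos_part_ge0 x : 0 <= pos_part x.
Proof. by rewrite le_max lexx orbT. Qed.

Lemma pos_part_ge x : x <= pos_part x.
Proof. by rewrite le_max lexx. Qed.

Lemma pos_part_addr_sqr x d :
  pos_part (x + d) ^+ 2 <= pos_part x ^+ 2 + 2 * pos_part x * d + d ^+ 2.
Proof. by rewrite /pos_part; case: (leP 0 x) => ?; case: (leP 0 (x + d)) => ?; nra. Qed.

Definition rm_weight (r : 'I_k -> R) := \sum_(i | S i) pos_part (r i).

(* Regret matching (Hart and Mas-Colell); [regret t i] is the cumulative regret,
   over rounds [s < t], of not having played the pure strategy [i]. *)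
Definition rm_play (r : 'I_k -> R) i :=
  if 0 < rm_weight r then (if S i then pos_part (r i) / rm_weight r else 0) else p0 i.

Definition rm_step (r : 'I_k -> R) i :=
  r i + (expected (rm_play r) (loss (rm_play r)) - loss (rm_play r) i).

Definition regret t := iter t rm_step (fun _ => 0).

Definition play t := rm_play (regret t).

Definition avg_play T i := (\sum_(s < T) play s i) / T%:R.

Lemma rm_weight_ge0 r : 0 <= rm_weight r.
Proof. by apply: sumr_ge0 => i _; apply: pos_part_ge0. Qed.

Lemma is_distr_rm_play r : is_distr (rm_play r).
Proof.
rewrite /rm_play; have [w_gt0|_] := ltP 0 (rm_weight r); last exact: p0_distr.
split=> [i|]; first by case: ifP => // _; rewrite divr_ge0 ?pos_part_ge0 ?ltW.
by rewrite -big_mkcond /= -mulr_suml divff ?gt_eqF.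
Qed.

Lemma rm_play_out r i : ~~ S i -> rm_play r i = 0.
Proof. by move=> Si; rewrite /rm_play (negbTE Si) (p0_out Si) if_same. Qed.

Lemma is_distr_avg_play T : (0 < T)%N -> is_distr (avg_play T).
Proof. by move=> T_gt0; apply: is_distr_average => // s; apply: is_distr_rm_play. Qed.

Lemma avg_play_out T i : ~~ S i -> avg_play T i = 0.
Proof. by move=> Si; rewrite /avg_play big1 ?mul0r // => s _; apply: rm_play_out. Qed.

(* Blackwell's condition: it cancels the cross term of [regret_potential]. *)
Lemma rm_play_orthogonal r l :
  \sum_(i | S i) pos_part (r i) * (expected (rm_play r) l - l i) = 0.
Proof.
have [w_gt0|] := ltP 0 (rm_weight r); last first.
  move=> w_le0; have w0 : rm_weight r = 0 by apply/le_anti; rewrite w_le0 rm_weight_ge0.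
  rewrite big1 // => i Si.
  by rewrite (psumr_eq0P (fun j _ => pos_part_ge0 (r j)) w0 Si) mul0r.
have -> : expected (rm_play r) l = (\sum_(i | S i) pos_part (r i) * l i) / rm_weight r.
  rewrite /expected (bigID S) /= [X in _ + X]big1 => [|i /negbTE Si]; last first.
    by rewrite /rm_play w_gt0 Si mul0r.
  by rewrite addr0 mulr_suml; apply: eq_bigr => i Si; rewrite /rm_play w_gt0 Si; ring.
under eq_bigr => i _ do rewrite mulrBr.
by rewrite sumrB -mulr_suml mulrC divfK ?subrr ?gt_eqF.
Qed.

Lemma regret_potential t :
  \sum_(i | S i) pos_part (regret t i) ^+ 2 <= t%:R * (#|S|%:R * B ^+ 2).
Proof.
elim: t => [|t IH].
  by rewrite mul0r big1 // => i _; rewrite /pos_part maxxx expr0n.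
rewrite /regret iterS -/(regret t) /rm_step.
set r := regret t; set p := rm_play r; set d := fun i => expected p (loss p) - loss p i.
apply: le_trans (_ : \sum_(i | S i) (pos_part (r i) ^+ 2 + 2 * pos_part (r i) * d i
                                     + d i ^+ 2) <= _).
  by apply: ler_sum => i _; apply: pos_part_addr_sqr.
rewrite !big_split /=.
under [X in _ + X + _]eq_bigr => i _ do rewrite -mulrA.
rewrite -mulr_sumr rm_play_orthogonal mulr0 addr0 -nat1r mulrDl mul1r addrC lerD //.
rewrite mulr_natl -sumr_const; apply: ler_sum => i _.
have e_ge0 : 0 <= expected p (loss p).
  by apply: expected_ge0 => //; apply: (is_distr_rm_play r).1.
have e_le : expected p (loss p) <= B by apply: expected_le => //; apply: is_distr_rm_play.
by have := loss_ge0 p i; have := loss_le p i; rewrite /d; nra.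
Qed.

Lemma regretE t i :
  regret t i = \sum_(s < t) (expected (play s) (loss (play s)) - loss (play s) i).
Proof. by elim: t => [|t IH]; rewrite ?big_ord0 // big_ord_recr -IH. Qed.

Theorem regret_matching_bound t i : S i ->
  \sum_(s < t) expected (play s) (loss (play s))
    <= \sum_(s < t) loss (play s) i + Num.sqrt (t%:R * #|S|%:R) * B.
Proof.
move=> Si; rewrite addrC -lerBlDr -sumrB -regretE.
have B_ge0 : 0 <= B := le_trans (loss_ge0 p0 i) (loss_le p0 i).
apply: le_trans (pos_part_ge _) _.
rewrite -[pos_part _]ger0_norm ?pos_part_ge0 // -[B]ger0_norm // -!sqrtr_sqr.
rewrite -sqrtrM ?mulr_ge0 // ler_sqrt ?mulr_ge0 // -mulrA.
apply: le_trans (regret_potential t).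
by rewrite (bigD1 i) //= lerDl; apply: sumr_ge0 => j _; apply: sqr_ge0.
Qed.

End RegretMatching.

Section Minimax.
Variable R : realType.

Lemma exists_near_sup (X : Type) (P : X -> Prop) (f : X -> R) d :
  (exists x, P x) -> (exists b, forall x, P x -> f x <= b) -> 0 < d ->
  exists x, P x /\ forall y, P y -> f y <= f x + d.
Proof.
move=> [x0 Px0] [b fb] d_gt0.
have supE : has_sup [set f x | x in P].
  by split; [exists (f x0), x0 | exists b => _ [x Px <-]; apply: fb].
have [_ [x Px <-] fx_gt] := sup_adherent d_gt0 supE.
exists x; split=> // y Py; apply: ltW; rewrite -ltrBlDr.
by apply: le_lt_trans fx_gt; rewrite lerD2r; apply: sup_upper_bound => //; exists y.
Qed.

Variables (k : nat) (S : pred 'I_k) (p0 : 'I_k -> R).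
Hypothesis p0_distr : is_distr p0.
Hypothesis p0_out : forall i, ~~ S i -> p0 i = 0.
Variables (X : Type) (feasible : X -> Prop) (q : X -> 'I_k -> R) (B c : R).
Hypothesis feasible_inhabited : exists x, feasible x.
Hypothesis q_ge0 : forall x i, feasible x -> 0 <= q x i.
Hypothesis q_le : forall x i, feasible x -> q x i <= B.
Hypothesis sum_q_le : forall T (xs : 'I_T -> X), (forall t, feasible (xs t)) ->
  exists2 i, S i & \sum_t q (xs t) i <= T%:R * c.

Lemma avg_play_near_best_le (br : ('I_k -> R) -> X) d T x :
  (forall p, feasible (br p)) ->
  (forall p y, feasible y -> expected p (q y) <= expected p (q (br p)) + d) ->
  (0 < T)%N -> Num.sqrt (T%:R * #|S|%:R) * B <= T%:R * d -> feasible x ->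
  expected (avg_play S p0 (fun p => q (br p)) T) (q x) <= c + 2 * d.
Proof.
move=> br_feasible br_near_best T_gt0 regret_small fx.
set loss := fun p => q (br p); set ps := play S p0 loss.
have loss_ge0 p i : 0 <= loss p i by apply: q_ge0.
have loss_le p i : loss p i <= B by apply: q_le.
have [i Si sum_loss_le] := @sum_q_le T (fun s => br (ps s)) (fun s => br_feasible _).
have := regret_matching_bound p0_distr loss_ge0 loss_le T Si.
rewrite /avg_play expected_average ler_pdivrMr ?ltr0n // -/ps => regret_le.
apply: le_trans (_ : \sum_(s < T) (expected (ps s) (loss (ps s)) + d) <= _).
  by apply: ler_sum => s _; apply: br_near_best.
rewrite big_split sumr_const card_ord -mulr_natr /=.
by move: regret_le sum_loss_le regret_small; rewrite /loss; lra.
Qed.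

Theorem minimax_by_regret_matching eps : 0 < eps ->
  exists p, is_distr p /\ (forall i, p i != 0 -> S i) /\
            forall x, feasible x -> expected p (q x) <= c + eps.
Proof.
move=> eps_gt0; pose d := eps / 2; have d_gt0 : 0 < d by rewrite divr_gt0.
have near_best p : exists x, feasible x /\
    forall y, feasible y -> expected p (q y) <= expected p (q x) + d.
  apply: exists_near_sup => //.
  exists (\sum_i `|p i| * B) => y fy; apply: ler_sum => i _.
  apply: le_trans (ler_norm _) _; rewrite normrM ler_wpM2l //.
  by rewrite ger0_norm ?q_ge0 ?q_le.
have [br br_spec] := choice near_best.
have B_ge0 : 0 <= B.
  have [x0 fx0] := feasible_inhabited.
  have [i _ _] := @sum_q_le 1 (fun _ => x0) (fun _ => fx0).
  exact: le_trans (q_ge0 i fx0) (q_le i fx0).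
have [T T_large] : exists T, #|S|%:R * B ^+ 2 / d ^+ 2 < T.+1%:R.
  by eexists; apply: truncnS_gt.
have regret_small : Num.sqrt (T.+1%:R * #|S|%:R) * B <= T.+1%:R * d.
  rewrite -[B]ger0_norm // -sqrtr_sqr -sqrtrM ?mulr_ge0 //.
  have Td_ge0 : 0 <= T.+1%:R * d by rewrite mulr_ge0 // ltW.
  rewrite -[T.+1%:R * d]ger0_norm // -sqrtr_sqr ler_sqrt ?sqr_ge0 //.
  rewrite -mulrA exprMn expr2 -mulrA ler_wpM2l //; apply: ltW.
  by rewrite -ltr_pdivrMr ?exprn_gt0.
exists (avg_play S p0 (fun p => q (br p)) T.+1); split; [|split].
- exact: is_distr_avg_play.
- by move=> i; apply: contraNT => /avg_play_out ->.
- move=> x fx; have -> : eps = 2 * d by rewrite /d mulrC divfK ?pnatr_eq0.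
  by apply: avg_play_near_best_le => // p; case: (br_spec p).
Qed.

End Minimax.

Section UnitCubeImages.
Variables (R : realType) (k N : nat) (U M : 'M[R]_(k, N)) (pi : 'I_k -> R).
Hypothesis pi_distr : is_distr pi.
Hypothesis UE : forall i j, U i j = pi i * M i j.

Definition in_unit_cube n (f : 'cV[R]_n) := forall j, `|f j ord0| <= 1.

Definition sqr_image (f : 'cV[R]_N) i := (M *m f) i ord0 ^+ 2.

Lemma norm_inf_L2_le (p : 'I_k -> R) c : 0 <= c ->
  (forall f, in_unit_cube f -> expected p (sqr_image f) <= c ^+ 2) ->
  norm_inf_L2 p M <= c.
Proof.
move=> c_ge0 Mf_le; apply: ge_sup.
  by exists (L2norm p (M *m 0)), 0; split=> // j; rewrite mxE normr0.
move=> _ [f [f_le1 ->]]; rewrite -[c]ger0_norm // -sqrtr_sqr ler_sqrt ?sqr_ge0 //.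
exact: Mf_le.
Qed.

Lemma sqr_image_le f i :
  in_unit_cube f -> sqr_image f i <= (\sum_i \sum_j `|M i j|) ^+ 2.
Proof.
have M_ge0 : 0 <= \sum_i \sum_j `|M i j| by apply: sumr_ge0 => i' _; apply: sumr_ge0.
move=> f_le1; rewrite /sqr_image -real_normK ?num_real // lerXn2r ?nnegrE //.
rewrite mxE; apply: le_trans (ler_norm_sum _ _ _) _.
apply: le_trans (_ : \sum_j `|M i j| <= _).
  by apply: ler_sum => j _; rewrite normrM ler_piMr.
by rewrite (bigD1 i) //= lerDl; apply: sumr_ge0 => i' _; apply: sumr_ge0.
Qed.

Lemma exists_small_sum_sqr_image T (fs : 'I_T -> 'cV[R]_N) :
  (forall t, in_unit_cube (fs t)) ->
  exists2 i, pi i != 0 & \sum_t sqr_image (fs t) i <= T%:R * gamma2_dual U ^+ 2.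
Proof.
move=> fs_le1; pose F : 'M[R]_(N, T) := \matrix_(j, t) fs t j ord0.
have MF t i : (M *m F) i t = (M *m fs t) i ord0.
  by rewrite !mxE; apply: eq_bigr => j _; rewrite mxE.
have F_le1 j t : `|F j t| <= 1 by rewrite mxE; apply: fs_le1.
have := sum_weighted_row_norm_le pi_distr.1 UE F_le1.
case/(expected_le_witness pi_distr) => i pi_neq0 row_le; exists i => //.
rewrite /sqr_image; under eq_bigr => t _ do rewrite -MF.
rewrite -(sqr_sqrtr (sumr_sqr_ge0 _)) -(sqr_sqrtr (ler0n R T)) -exprMn.
by rewrite lerXn2r ?nnegrE ?mulr_ge0 ?sqrtr_ge0 ?gamma2_dual_ge0.
Qed.

Lemma expected_sqr_image_eq0 f : gamma2_dual U = 0 -> in_unit_cube f ->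
  expected pi (sqr_image f) = 0.
Proof.
move=> gam0 f_le1; have f_le1' j t : `|f j t| <= 1 by rewrite ord1.
have := sum_weighted_row_norm_le pi_distr.1 UE f_le1'.
rewrite gam0 mulr0 => weighted_le0.
have terms_ge0 i : 0 <= pi i * row_norm (M *m f) i.
  by rewrite mulr_ge0 ?row_norm_ge0 ?pi_distr.1.
have /psumr_eq0P terms0 : \sum_i pi i * row_norm (M *m f) i = 0.
  by apply/le_anti; rewrite weighted_le0 sumr_ge0.
rewrite /expected big1 // => i _.
have -> : sqr_image f i = row_norm (M *m f) i ^+ 2.
  by rewrite /row_norm big_ord1 sqr_sqrtr ?sqr_ge0.
by rewrite expr2 mulrA terms0 ?mul0r.
Qed.
End UnitCubeImages.

Theorem lemma3p7 (R : realType) (k N : nat) (U M : 'M[R]_(k, N)) (pi : 'I_k -> R) :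
  is_distr pi ->
  (forall i j, U i j = pi i * M i j) ->
  exists pihat : 'I_k -> R,
    is_distr pihat /\ (forall i, pihat i != 0 -> pi i != 0) /\
    norm_inf_L2 pihat M <= 4 * gamma2_dual U.
Proof.
move=> pi_distr UE; set gam := gamma2_dual U.
have gam_ge0 : 0 <= gam := gamma2_dual_ge0 U.
(* The minimax bound only holds up to a positive slack, here [gam ^+ 2]. *)
have [gam0|gam_neq0] := eqVneq gam 0.
  exists pi; do 2!split=> //; rewrite gam0 mulr0.
  apply: norm_inf_L2_le => // f f_le1.
  by rewrite (expected_sqr_image_eq0 pi_distr UE) ?expr0n.
have gam_gt0 : 0 < gam by rewrite lt_def gam_neq0.
have pi_out i : ~~ (pi i != 0) -> pi i = 0 by move/negPn/eqP.
have cube0 : exists f, @in_unit_cube R N f by exists 0 => j; rewrite mxE normr0.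
have [pihat [pihat_distr [pihat_supp pihat_le]]] :=
  minimax_by_regret_matching pi_distr pi_out cube0 (fun f i _ => sqr_ge0 _)
    (fun f i => @sqr_image_le R k N M f i) (exists_small_sum_sqr_image pi_distr UE)
    (exprn_gt0 2 gam_gt0).
exists pihat; do 2!split=> //.
apply: norm_inf_L2_le => [|f /pihat_le]; first by rewrite mulr_ge0.
by rewrite -/gam; nra.
Qed.
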